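(* Let $G$ be a completable graph and let $A(G),B(G)$ be $G$-partial matrices with $0<A(G)\leq B(G)$. Then $0<\det(\widehat{A})\leq\det(\widehat{B})$, where $\widehat{A},\widehat{B}$ are the maximum determinant positive definite completions of $A(G),B(G)$.
   Context: A graph $G=(V,E)$ is a finite undirected graph on $V=\{1,\dots,n\}$ containing all loops. A $G$-partial matrix has entries specified exactly for $\{i,j\}\in E$; a completion agrees with it on $E$; differences are entrywise on $E$. It is partial positive (semi)definite if Hermitian on $E$ and every principal submatrix indexed by a clique is positive (semi)definite. $C(G)\leq D(G)$ means $D(G)-C(G)$ is partial positive semidefinite, and $0<C(G)$ means $C(G)$ is partial positive definite. $G$ is completable if every $G$-partial positive semidefinite matrix has a positive semidefinite completion (equivalently chordal). The maximum determinant positive definite completion of a partial positive definite matrix is its unique positive definite completion of largest determinant. *)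

From HB Require Import structures.
From mathcomp Require Import all_boot all_order all_algebra.
Set Implicit Arguments. Unset Strict Implicit. Unset Printing Implicit Defensive.
Import Order.TTheory GRing.Theory Num.Theory.
Local Open Scope ring_scope.

Section Defs.
Variable C : numClosedFieldType.

Definition is_graph (n : nat) (e : rel 'I_n) : Prop :=
  (forall i, e i i) /\ (forall i j, e i j = e j i).

Definition ctrmx m n (M : 'M[C]_(m, n)) : 'M[C]_(n, m) := (map_mx Num.conj M)^T.

Definition hermitian n (M : 'M[C]_n) : Prop := forall i j, M i j = (M j i)^*.

Definition psd n (M : 'M[C]_n) : Prop :=
  hermitian M /\ forall x : 'cV[C]_n, 0 <= (ctrmx x *m M *m x) 0 0.
Definition pd n (M : 'M[C]_n) : Prop :=
  hermitian M /\ forall x : 'cV[C]_n, x != 0 -> 0 < (ctrmx x *m M *m x) 0 0.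

(* G-partial matrices are represented by full matrices whose entries off the
   edge set are ignored. *)
Definition is_clique n (e : rel 'I_n) (S : {set 'I_n}) : Prop :=
  forall i j, i \in S -> j \in S -> e i j.

Definition principal_submx n (A : 'M[C]_n) (S : {set 'I_n}) : 'M[C]_#|S| :=
  \matrix_(i < #|S|, j < #|S|) A (enum_val i) (enum_val j).

Definition hermitian_on n (e : rel 'I_n) (A : 'M[C]_n) : Prop :=
  forall i j, e i j -> A i j = (A j i)^*.

Definition partial_psd n (e : rel 'I_n) (A : 'M[C]_n) : Prop :=
  hermitian_on e A /\
  forall S : {set 'I_n}, is_clique e S -> psd (principal_submx A S).

Definition partial_pd n (e : rel 'I_n) (A : 'M[C]_n) : Prop :=
  hermitian_on e A /\
  forall S : {set 'I_n}, is_clique e S -> pd (principal_submx A S).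

Definition completion n (e : rel 'I_n) (A M : 'M[C]_n) : Prop :=
  forall i j, e i j -> M i j = A i j.

Definition partial_le n (e : rel 'I_n) (A B : 'M[C]_n) : Prop :=
  partial_psd e (B - A).

Definition completable n (e : rel 'I_n) : Prop :=
  forall A : 'M[C]_n, partial_psd e A -> exists M, completion e A M /\ psd M.

Definition maxdet_completion n (e : rel 'I_n) (A M : 'M[C]_n) : Prop :=
  completion e A M /\ pd M /\
  forall M' : 'M[C]_n, completion e A M' -> pd M' -> \det M' <= \det M.

End Defs.

From mathcomp Require Import all_boot all_order all_algebra.
Set Implicit Arguments. Unset Strict Implicit.
Import Order.TTheory GRing.Theory Num.Theory.
Local Open Scope ring_scope.

(* B - A is partial positive semidefinite on a completable graph, so it has
   a positive semidefinite completion D, and Ahat + D is a positive definite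
   completion of B; hence det (Ahat + D) <= det Bhat by maximality.  On the
   other hand det (Ahat + D) / det Ahat is the product of the eigenvalues of
   (Ahat + D) Ahat^-1, and each of them is >= 1: for a left eigenvector v,
   z (v Ahat v^* ) = v Ahat v^* + v D v^* >= v Ahat v^* > 0. *)

Section PositiveDefinite.
Variable C : numClosedFieldType.

Lemma ctrmxK m n (M : 'M[C]_(m, n)) : ctrmx (ctrmx M) = M.
Proof. by apply/matrixP => i j; rewrite !mxE conjCK. Qed.

Lemma ctrmx_eq0 m n (M : 'M[C]_(m, n)) : (ctrmx M == 0) = (M == 0).
Proof.
apply/eqP/eqP => [M0|->]; last by apply/matrixP => i j; rewrite !mxE rmorph0.
apply/matrixP => i j; move/matrixP/(_ j i)/eqP: M0.
by rewrite !mxE conjC_eq0 => /eqP.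
Qed.

Lemma pd_rform_gt0 n (M : 'M[C]_n) (v : 'rV[C]_n) :
  pd M -> v != 0 -> 0 < (v *m M *m ctrmx v) 0 0.
Proof.
by case=> _ Mpos v0; have := Mpos (ctrmx v); rewrite ctrmxK ctrmx_eq0; apply.
Qed.

Lemma psd_rform_ge0 n (M : 'M[C]_n) (v : 'rV[C]_n) :
  psd M -> 0 <= (v *m M *m ctrmx v) 0 0.
Proof. by case=> _ Mnneg; have := Mnneg (ctrmx v); rewrite ctrmxK. Qed.

Lemma rnorm_ge0 n (v : 'rV[C]_n) : 0 <= (v *m ctrmx v) 0 0.
Proof.
by rewrite mxE sumr_ge0 // => i _; rewrite !mxE mul_conjC_ge0.
Qed.

Lemma rform_eigen n (M P : 'M[C]_n) (v : 'rV[C]_n) z :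
  v *m M = z *: (v *m P) ->
  (v *m M *m ctrmx v) 0 0 = z * (v *m P *m ctrmx v) 0 0.
Proof. by move=> ->; rewrite -scalemxAl mxE. Qed.

Lemma pd_eigenvalue_gt0 n (P : 'M[C]_n) z : pd P -> eigenvalue P z -> 0 < z.
Proof.
move=> Ppd /eigenvalueP[v vP v0].
have := pd_rform_gt0 Ppd v0.
rewrite (@rform_eigen _ _ 1%:M _ z) ?mulmx1 // => zv_gt0.
have v_gt0 : 0 < (v *m ctrmx v) 0 0.
  rewrite lt_def rnorm_ge0 andbT.
  by apply: contraTneq zv_gt0 => ->; rewrite mulr0 ltxx.
by rewrite -(pmulr_lgt0 _ v_gt0).
Qed.

Lemma det_prod_eigenvalues n (N : 'M[C]_n) :
  exists2 s : seq C, {subset s <= eigenvalue N} & \det N = \prod_(z <- s) z.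
Proof.
have [s charN] := closed_field_poly_normal (char_poly N).
rewrite (monicP (char_poly_monic N)) scale1r in charN.
exists s => [z zs|].
  by rewrite -topredE /= eigenvalue_root_char charN root_prod_XsubC.
have size_s : size s = n.
  by have := size_char_poly N; rewrite charN size_prod_XsubC => -[].
have := char_poly_det N; rewrite charN -horner_coef0 horner_prod.
under eq_bigr do rewrite hornerXsubC sub0r.
rewrite (big_nth 0) big_mkord prodrN cardT size_enum_ord.
rewrite -[X in _ ^+ X * \det N]size_s.
have sign_unit : (-1) ^+ size s \is a @GRing.unit C by rewrite unitrX ?unitrN1.
by move/(mulrI sign_unit) <-; rewrite [RHS](big_nth 0) big_mkord.
Qed.

Lemma pd_det_gt0 n (P : 'M[C]_n) : pd P -> 0 < \det P.
Proof.
move=> Ppd; have [s sP ->] := det_prod_eigenvalues P.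
by rewrite big_seq prodr_gt0 // => z /sP /(pd_eigenvalue_gt0 Ppd).
Qed.

Lemma pd_unitmx n (P : 'M[C]_n) : pd P -> P \in unitmx.
Proof. by move=> Ppd; rewrite unitmxE unitfE gt_eqF ?pd_det_gt0. Qed.

Lemma eigenvalue_mulmx_invmx_ge1 n (P D : 'M[C]_n) z :
  pd P -> psd D -> eigenvalue ((P + D) *m invmx P) z -> 1 <= z.
Proof.
move=> Ppd Dpsd /eigenvalueP[v vPD v0].
have : v *m (P + D) = z *: (v *m P).
  by rewrite scalemxAl -vPD -mulmxA mulmxKV ?pd_unitmx.
move/rform_eigen; rewrite mulmxDr mulmxDl mxE => PD_z.
have vPv_gt0 := pd_rform_gt0 Ppd v0.
by rewrite -(ler_pM2r vPv_gt0) mul1r -PD_z lerDl psd_rform_ge0.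
Qed.

Lemma det_le_addr_psd n (P D : 'M[C]_n) :
  pd P -> psd D -> \det P <= \det (P + D).
Proof.
move=> Ppd Dpsd; rewrite -(mulmxKV (pd_unitmx Ppd) (P + D)) det_mulmx.
rewrite ler_peMl ?(ltW (pd_det_gt0 Ppd)) //.
have [s sPD ->] := det_prod_eigenvalues ((P + D) *m invmx P).
rewrite big_seq; apply: (big_ind (fun x => 1 <= x)) => //.
  exact: mulr_ege1.
by move=> z /sPD /(eigenvalue_mulmx_invmx_ge1 Ppd Dpsd).
Qed.

Lemma pd_addr_psd n (P D : 'M[C]_n) : pd P -> psd D -> pd (P + D).
Proof.
move=> [Pherm Ppos] [Dherm Dnneg]; split=> [i j|x x0].
  by rewrite !mxE rmorphD /= -Pherm -Dherm.
by rewrite mulmxDr mulmxDl mxE; apply: ltr_wpDr; [apply: Dnneg | apply: Ppos].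
Qed.

End PositiveDefinite.

Lemma completion_add (C : numClosedFieldType) n (e : rel 'I_n)
    (A B M D : 'M[C]_n) :
  completion e A M -> completion e (B - A) D -> completion e B (M + D).
Proof.
by move=> MA DBA i j eij; rewrite !mxE MA // DBA // !mxE addrC subrK.
Qed.

Theorem theorem6p12 (C : numClosedFieldType) (n : nat) (e : rel 'I_n)
    (A B Ahat Bhat : 'M[C]_n) :
  is_graph e -> completable C e ->
  partial_pd e A -> partial_le e A B ->
  maxdet_completion e A Ahat -> maxdet_completion e B Bhat ->
  0 < \det Ahat /\ \det Ahat <= \det Bhat.
Proof.
(* The hypotheses on e and A only serve to guarantee that Ahat exists. *)
move=> _ completable_e _ AleB [Ahat_A [Ahat_pd _]] [_ [_ Bhat_max]].
split; first exact: pd_det_gt0.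
have [D [D_BA D_psd]] := completable_e _ AleB.
apply: le_trans (det_le_addr_psd Ahat_pd D_psd) _.
apply: Bhat_max; first exact: completion_add Ahat_A D_BA.
exact: pd_addr_psd Ahat_pd D_psd.
Qed.
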